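(* In a network satisfying (H1) and (H2) containing the two connected components $Y+S_0\rightleftarrows U_1\to\cdots\rightleftarrows U_L\to Y+S_L$ and $\widetilde Y+S_L\rightleftarrows V_L\to\widetilde Y+S_{L-1}\rightleftarrows\cdots\rightleftarrows V_1\to\widetilde Y+S_0$ ($L\ge1$), with rate constants as in the context, fix $1\le n\le L$ and $0\le k\le n-1$. Let $\ell$ be the minimal positive integer such that a monomial $y^r v_{n-k}$ with some $r\ge0$ appears in $s_n^{(\ell)}$. Then $\ell=2k+1$, $r=k$, and the coefficient of $y^k v_{n-k}$ in $s_n^{(2k+1)}$ is \[\tilde b_{n-k}\prod_{j=0}^{k-1}a_{n-j}\,c_{n-j}\] (empty product $=1$).
   Context: Species are capital letters, concentrations lower-case letters. Mass-action system: $\dot{\mathbf{x}}=\sum_{y\to y'}k_{yy'}\mathbf{x}^y(y'-y)$, rates $k_{yy'}>0$. Total derivative: $\dot\varphi=\sum_i\frac{\partial\varphi}{\partial x_i}\dot x_i$ with $\dot x_i$ replaced by the right-hand side; $\varphi^{(\ell)}$ the $\ell$-th iterate; a monomial appears if its coefficient (a polynomial in rate constants) is nonzero. (H1) Every connected component has the form $Y+S_0\rightleftarrows U_1\to\cdots\rightleftarrows U_L\to Y+S_L$ (reactions $Y+S_{j-1}\to U_j$, $U_j\to Y+S_{j-1}$, $U_j\to Y+S_j$), unique enzyme; intermediates distinct throughout the network; non-intermediates of a component pairwise distinct but may appear in other components; each complex in a unique component. $\mathscr{S}_U$ = substrates/products of the component of intermediate $U$. (H2) A partition $\mathscr{S}^{(0)}\sqcup\cdots\sqcup\mathscr{S}^{(M)}$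 ($M\ge2$, nonempty, $\mathscr{S}^{(0)}$ the intermediates) with: for each intermediate $U$ with enzyme $Y$, some $\alpha\ge1$ has $\mathscr{S}_U\subseteq\mathscr{S}^{(\alpha)}$, $Y\notin\mathscr{S}^{(\alpha)}$. Rates: $Y+S_{j-1}\to U_j$: $a_j$; $U_j\to Y+S_{j-1}$: $b_j$; $U_j\to Y+S_j$: $c_j$; $\widetilde Y+S_j\to V_j$: $\tilde a_j$; $V_j\to\widetilde Y+S_j$: $\tilde b_j$; $V_j\to\widetilde Y+S_{j-1}$: $\tilde c_j$ ($1\le j\le L$). *)

From HB Require Import structures.
From mathcomp Require Import all_boot all_order all_algebra.
Set Implicit Arguments. Unset Strict Implicit. Unset Printing Implicit Defensive.
Import Order.TTheory GRing.Theory Num.Theory.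
Local Open Scope ring_scope.

(* A network satisfying the shape part of (H1) is given by its components:
   component c has enzyme [enz c], length [len c], non-intermediate substrates
   [sub c 0], ..., [sub c (len c)] and intermediates [intm c 1], ...,
   [intm c (len c)], with reactions (for 1 <= j <= len c)
     enz c + sub c (j-1) -> intm c j      (label (c, j, 0), "a_j")
     intm c j -> enz c + sub c (j-1)      (label (c, j, 1), "b_j")
     intm c j -> enz c + sub c j          (label (c, j, 2), "c_j").  *)
Record network (S C : finType) := Network {
  len : C -> nat;
  enz : C -> S;
  sub : C -> nat -> S;
  intm : C -> nat -> S }.

Section Net.
Variables (S C : finType) (N : network S C).

Definition cplx1 (a : S) : {ffun S -> nat} := [ffun x => nat_of_bool (x == a)].
Definition cplx2 (a b : S) : {ffun S -> nat} :=
  [ffun x => (nat_of_bool (x == a) + nat_of_bool (x == b))%N].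

(* rate constant labels: (component, step j, kind 0=a / 1=b / 2=c) *)
Definition label := (C * nat * nat)%type.

Definition reaction := (label * ({ffun S -> nat} * {ffun S -> nat}))%type.

Definition reactions : seq reaction :=
  flatten [seq flatten [seq
     [:: ((c, j, 0%N), (cplx2 (enz N c) (sub N c j.-1), cplx1 (intm N c j)));
         ((c, j, 1%N), (cplx1 (intm N c j), cplx2 (enz N c) (sub N c j.-1)));
         ((c, j, 2%N), (cplx1 (intm N c j), cplx2 (enz N c) (sub N c j)))]
     | j <- iota 1 (len N c)] | c <- enum C].

Definition H1 : Prop :=
  (forall c, (1 <= len N c)%N) /\
      (forall c j, (j <= len N c)%N -> enz N c <> sub N c j) /\
      (forall c j j', (j <= len N c)%N -> (j' <= len N c)%N ->
          sub N c j = sub N c j' -> j = j') /\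
      (forall c j c' j', (1 <= j <= len N c)%N -> (1 <= j' <= len N c')%N ->
          intm N c j = intm N c' j' -> c = c' /\ j = j') /\
      (forall c j c', (1 <= j <= len N c)%N -> intm N c j <> enz N c') /\
      (forall c j c' j', (1 <= j <= len N c)%N -> (j' <= len N c')%N ->
          intm N c j <> sub N c' j') /\
      (forall c j c' j', c <> c' -> (j <= len N c)%N -> (j' <= len N c')%N ->
          cplx2 (enz N c) (sub N c j) <> cplx2 (enz N c') (sub N c' j')).

Definition is_intermediate (x : S) : Prop :=
  exists c j, (1 <= j <= len N c)%N /\ x = intm N c j.

(* (H2): partition S^(0) |_| ... |_| S^(M) given by a class function *)
Definition H2 : Prop :=
  exists (M : nat) (cls : S -> nat),
  [/\ (2 <= M)%N,
      (forall x, (cls x <= M)%N),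
      (forall a, (a <= M)%N -> exists x, cls x = a),
      (forall x, cls x = 0%N <-> is_intermediate x) &
      (forall c, exists alpha, (1 <= alpha)%N /\
          (forall j, (j <= len N c)%N -> cls (sub N c j) = alpha) /\
          cls (enz N c) <> alpha)].

(* Polynomials in the concentrations with coefficients polynomials (over Z)
   in the rate constants: a list of terms (integer, species exponent,
   multiset of rate labels). *)
Definition term := (int * ({ffun S -> nat} * seq label))%type.
Definition rpoly := seq term.

Definition coef (p : rpoly) (m : {ffun S -> nat}) (e : seq label) : int :=
  \sum_(t <- p | (t.2.1 == m) && perm_eq t.2.2 e) t.1.

(* the monomial x^m appears: its coefficient is a nonzero polynomial in the
   rate constants *)
Definition appears (p : rpoly) (m : {ffun S -> nat}) : Prop :=
  exists e, coef p m e <> 0.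

(* total derivative along the mass-action system:
   phi' = sum_i d phi/d x_i * sum_{y->y'} k_{yy'} x^y (y'_i - y_i) *)
Definition lie_term (t : term) : rpoly :=
  flatten [seq [seq (t.1 * (t.2.1 i)%:R * ((r.2.2 i)%:R - (r.2.1 i)%:R),
                     ([ffun x => (t.2.1 x - nat_of_bool (x == i) + r.2.1 x)%N],
                      r.1 :: t.2.2))
                | r : reaction <- reactions] | i <- enum S].

Definition lie (p : rpoly) : rpoly := flatten (map lie_term p).

Definition var (x : S) : rpoly := [:: (1, (cplx1 x, [::]))].

End Net.

(* A monomial of [s_n^{(l)}] is produced by paths of [l] steps starting at
   [s_n], each step replacing one factor [x_i] of the current monomial by the
   reactant complex of a reaction that changes [x_i]; its coefficient sums, over
   these paths, the products of the rate constants used.  Every reactant contains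
   a species other than [Y], so the degree outside [Y] never drops along a path,
   and a path ending at [y^r v_{n-k}] only visits monomials [y^b x].  By (H1) and
   (H2) the walk of [x] can only follow the chain
   [S_n -> U_n -> S_{n-1} -> ... -> S_{n-k} -> V_{n-k}], make detours, or enter
   intermediates from which [V_{n-k}] is unreachable.  A potential shows that at
   least [2k+1] steps and [k] factors [y] are needed, with equality only along
   the chain itself, whose product of rates is [b~_{n-k} prod a_{n-j} c_{n-j}]. *)

From HB Require Import structures.
From mathcomp Require Import all_boot all_order all_algebra.
From mathcomp Require Import zify.
Import Order.TTheory GRing.Theory Num.Theory.

Set Implicit Arguments.
Unset Strict Implicit.
Unset Printing Implicit Defensive.

Lemma uniq_flatten_keyed (T U : eqType) (s : seq T) (f : T -> seq U) (key : U -> T) :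
  uniq s -> {in s, forall x, uniq (f x)} -> (forall x z, z \in f x -> key z = x) ->
  uniq (flatten (map f s)).
Proof.
elim: s => [|x s IH] //= /andP [xNs uniq_s] uniq_f keyP.
rewrite cat_uniq uniq_f ?mem_head //= IH ?andbT //; last first.
  by move=> y ys; apply: uniq_f; rewrite inE ys orbT.
apply/hasP => -[z /flattenP [_ /mapP [y ys ->] zfy] zfx].
by move: xNs; rewrite -(keyP _ _ zfx) (keyP _ _ zfy) ys.
Qed.

(** * Iterated total derivatives *)

Definition mon_replace (S : finType) (m : {ffun S -> nat}) (i : S) (y : {ffun S -> nat}) :=
  [ffun x => (m x - nat_of_bool (x == i) + y x)%N].

Section LieCalculus.
Variables (S C : finType) (N : network S C).
Local Open Scope ring_scope.

Definition lie_child (u : term S C) (i : S) (r : reaction S C) : term S C :=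
  (u.1 * (u.2.1 i)%:R * ((r.2.2 i)%:R - (r.2.1 i)%:R),
   (mon_replace u.2.1 i r.2.1, r.1 :: u.2.2)).

Lemma lie_termE u :
  lie_term N u = flatten [seq [seq lie_child u i r | r <- reactions N] | i <- enum S].
Proof. by []. Qed.

Lemma lie_cat p q : lie N (p ++ q) = lie N p ++ lie N q.
Proof. by rewrite /lie map_cat flatten_cat. Qed.

Lemma iter_lie_cat d p q :
  iter d (lie N) (p ++ q) = iter d (lie N) p ++ iter d (lie N) q.
Proof. by elim: d => //= d ->; rewrite lie_cat. Qed.

Lemma iter_lie_flatten d p :
  iter d (lie N) p = flatten [seq iter d (lie N) [:: u] | u <- p].
Proof.
elim: p => [|u p IH]; first by elim: d => //= d ->.
by rewrite -cat1s iter_lie_cat IH.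
Qed.

Lemma iter_lieS1 d u : iter d.+1 (lie N) [:: u] = iter d (lie N) (lie_term N u).
Proof. by rewrite iterSr /lie /= cats0. Qed.

Lemma coef_cat (p q : rpoly S C) m e : coef (p ++ q) m e = coef p m e + coef q m e.
Proof. by rewrite /coef big_cat. Qed.

Lemma coef_flatten (ps : seq (rpoly S C)) m e :
  coef (flatten ps) m e = \sum_(p <- ps) coef p m e.
Proof.
elim: ps => [|p ps IH]; first by rewrite /coef !big_nil.
by rewrite /= coef_cat IH big_cons.
Qed.

Lemma coef_seq1 (u : term S C) m e :
  coef [:: u] m e = if (u.2.1 == m) && perm_eq u.2.2 e then u.1 else 0.
Proof. by rewrite /coef big_cons big_nil; case: ifP; rewrite ?addr0. Qed.

Lemma coef_neq0 (p : rpoly S C) m e :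
  coef p m e != 0 -> exists2 t, t \in p & (t.2.1 == m) && (t.1 != 0).
Proof.
move=> nz; apply/hasP; apply: contraNT nz => /hasPn no.
rewrite /coef big1_seq // => t /andP [/andP [tm _] tp].
by apply/eqP; move: (no t tp); rewrite tm /= negbK.
Qed.

Lemma coef_iter_lieS d u m e : coef (iter d.+1 (lie N) [:: u]) m e =
  \sum_(i <- enum S) \sum_(r <- reactions N) coef (iter d (lie N) [:: lie_child u i r]) m e.
Proof.
rewrite iter_lieS1 iter_lie_flatten coef_flatten big_map lie_termE big_flatten /= big_map.
by apply: eq_bigr => i _; rewrite big_map.
Qed.

Definition lie_step (m m' : {ffun S -> nat}) : Prop := exists i r,
  [/\ r \in reactions N, (0 < m i)%N, r.2.2 i != r.2.1 i & m' = mon_replace m i r.2.1].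

Fixpoint lie_path d (m m' : {ffun S -> nat}) : Prop :=
  if d is d.+1 then exists m1, lie_step m m1 /\ lie_path d m1 m' else m' = m.

Lemma lie_child_neq0 u i r : (lie_child u i r).1 != 0 ->
  [/\ u.1 != 0, (0 < u.2.1 i)%N & r.2.2 i != r.2.1 i].
Proof.
rewrite /lie_child /= !mulf_eq0 !negb_or subr_eq0 eqr_nat pnatr_eq0 -lt0n.
by case/andP => /andP [-> ->] ->.
Qed.

Lemma mem_iter_lie_path d u t : t \in iter d (lie N) [:: u] -> t.1 != 0 ->
  u.1 != 0 /\ lie_path d u.2.1 t.2.1.
Proof.
elim: d u => [|d IH] u; first by rewrite /= inE => /eqP -> ->.
rewrite iter_lieS1 iter_lie_flatten => /flattenP [_ /mapP [v v_child ->] tv] t_neq0.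
have [v_neq0 v_path] := IH v tv t_neq0.
move: v_child; rewrite lie_termE => /flattenP [_ /mapP [i _ ->] /mapP [r r_in v_def]]; subst v.
have [u_neq0 ui rN] := lie_child_neq0 v_neq0.
by split=> //; exists (lie_child u i r).2.1; split=> //; exists i, r.
Qed.

Lemma coef_iter_lie_eq0 d u m e : (u.1 != 0 -> ~ lie_path d u.2.1 m) ->
  coef (iter d (lie N) [:: u]) m e = 0.
Proof.
move=> no_path; rewrite /coef big1_seq // => t /andP [/andP [/eqP tm _] tu].
apply/eqP; apply: contraT => t_neq0.
by have [/no_path] := mem_iter_lie_path tu t_neq0; rewrite tm.
Qed.

Lemma appears_iter_lie_path d u m : appears (iter d (lie N) [:: u]) m ->
  lie_path d u.2.1 m.
Proof.
move=> [e /eqP /coef_neq0 [t tu /andP [/eqP <- t_neq0]]].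
by have [] := mem_iter_lie_path tu t_neq0.
Qed.

Definition reac_a c j : reaction S C :=
  ((c, j, 0%N), (cplx2 (enz N c) (sub N c j.-1), cplx1 (intm N c j))).
Definition reac_b c j : reaction S C :=
  ((c, j, 1%N), (cplx1 (intm N c j), cplx2 (enz N c) (sub N c j.-1))).
Definition reac_c c j : reaction S C :=
  ((c, j, 2%N), (cplx1 (intm N c j), cplx2 (enz N c) (sub N c j))).

Lemma reactionsP r : r \in reactions N <-> exists c j,
  (1 <= j <= len N c)%N /\ [\/ r = reac_a c j, r = reac_b c j | r = reac_c c j].
Proof.
have iotaE c j : (j \in iota 1 (len N c)) = (1 <= j <= len N c)%N.
  by rewrite mem_iota addnC addn1 ltnS.
split.
  move=> /flattenP [_ /mapP [c _ ->] /flattenP [_ /mapP [j + ->]]].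
  rewrite iotaE !inE => j_range /or3P r_kind.
  by exists c, j; split=> //; case: r_kind => /eqP ->; [apply: Or31|apply: Or32|apply: Or33].
move=> [c [j [j_range r_kind]]]; apply/flattenP.
exists (flatten [seq [:: reac_a c j'; reac_b c j'; reac_c c j'] | j' <- iota 1 (len N c)]).
  by apply/mapP; exists c; rewrite ?mem_enum.
apply/flattenP; exists [:: reac_a c j; reac_b c j; reac_c c j].
  by apply/mapP; exists j; rewrite ?iotaE.
by rewrite !inE; case: r_kind => ->; rewrite eqxx ?orbT.
Qed.

Lemma uniq_reactions : uniq (reactions N).
Proof.
apply: (@uniq_flatten_keyed _ _ _ _ (fun r : reaction S C => r.1.1.1)).
- exact: enum_uniq.
- move=> c _; apply: (@uniq_flatten_keyed _ _ _ _ (fun r : reaction S C => r.1.1.2)).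
  + exact: iota_uniq.
  + by move=> j _; apply: (@map_uniq _ _ (fun r : reaction S C => r.1.2)).
  + by move=> j r; rewrite !inE => /or3P [] /eqP ->.
- by move=> c r /flattenP [_ /mapP [j _ ->]]; rewrite !inE => /or3P [] /eqP ->.
Qed.

Lemma coef_iter_lieS_single d u m e i0 r0 : r0 \in reactions N ->
  (forall i r, r \in reactions N -> (i, r) != (i0, r0) ->
     coef (iter d (lie N) [:: lie_child u i r]) m e = 0) ->
  coef (iter d.+1 (lie N) [:: u]) m e = coef (iter d (lie N) [:: lie_child u i0 r0]) m e.
Proof.
move=> r0_in others; rewrite coef_iter_lieS (bigD1_seq i0) ?mem_enum ?enum_uniq //=.
rewrite [X in _ + X]big1_seq ?addr0; last first.
  move=> i /andP [i_neq _]; rewrite big1_seq // => r /andP [_ r_in].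
  by apply: others; rewrite // xpair_eqE negb_and i_neq.
rewrite (bigD1_seq r0) ?uniq_reactions //= [X in _ + X]big1_seq ?addr0 //.
move=> r /andP [r_neq r_in].
by apply: others; rewrite // xpair_eqE eqxx r_neq.
Qed.

End LieCalculus.

(** * Monomials of the form y^b x *)

Section YMonomials.
Variables (S : finType) (y : S).

Definition ymon (b : nat) (x : S) : {ffun S -> nat} :=
  [ffun z => (nat_of_bool (z == y) * b + nat_of_bool (z == x))%N].
Definition ymul (b : nat) (m : {ffun S -> nat}) : {ffun S -> nat} :=
  [ffun z => (nat_of_bool (z == y) * b + m z)%N].
Definition offdeg (m : {ffun S -> nat}) : nat := \sum_(z | z != y) m z.

Lemma offdeg_indicator w : \sum_(z | z != y) nat_of_bool (z == w) = nat_of_bool (w != y).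
Proof.
have [->|w_neq] := eqVneq w y; first by rewrite big1 // => z /negbTE ->.
by rewrite (bigD1 w) //= eqxx big1 // => z /andP [_ /negbTE ->].
Qed.

Lemma offdeg_cplx1 w : offdeg (cplx1 w) = nat_of_bool (w != y).
Proof. by rewrite /offdeg -offdeg_indicator; apply: eq_bigr => z _; rewrite ffunE. Qed.

Lemma offdeg_cplx2 a b :
  offdeg (cplx2 a b) = (nat_of_bool (a != y) + nat_of_bool (b != y))%N.
Proof.
by rewrite /offdeg -!offdeg_indicator -big_split; apply: eq_bigr => z _; rewrite ffunE.
Qed.

Lemma offdeg_ymul b m : offdeg (ymul b m) = offdeg m.
Proof. by apply: eq_bigr => z /negbTE z_neq; rewrite ffunE z_neq. Qed.

Lemma ymul_cplx1 b w : ymul b (cplx1 w) = ymon b w.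
Proof. by apply/ffunP => z; rewrite !ffunE. Qed.

Lemma ymul_cplx2l b w : ymul b (cplx2 y w) = ymon b.+1 w.
Proof. by apply/ffunP => z; rewrite !ffunE; case: (z == y); case: (z == w) => /=; lia. Qed.

Lemma ymul_cplx2r b w : ymul b (cplx2 w y) = ymon b.+1 w.
Proof. by apply/ffunP => z; rewrite !ffunE; case: (z == y); case: (z == w) => /=; lia. Qed.

Lemma ymon0 x : ymon 0 x = cplx1 x.
Proof. by apply/ffunP => z; rewrite !ffunE muln0. Qed.

Lemma offdeg_ymon b x : x != y -> offdeg (ymon b x) = 1%N.
Proof. by move=> x_neq; rewrite -ymul_cplx1 offdeg_ymul offdeg_cplx1 x_neq. Qed.

Lemma ymon_replace b x m : x != y -> mon_replace (ymon b x) x m = ymul b m.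
Proof. by move=> x_neq; apply/ffunP => z; rewrite !ffunE addnK. Qed.

Lemma ymon_self b x : x != y -> ymon b x x = 1%N.
Proof. by move=> /negbTE x_neq; rewrite ffunE x_neq eqxx. Qed.

Lemma ymon_gt0 b x i : (0 < ymon b x i)%N -> i = y \/ i = x.
Proof. by rewrite ffunE; case: eqP => [|_]; [left|case: eqP => //; right]. Qed.

Lemma ymon_inj b x b' x' : x != y -> x' != y -> ymon b x = ymon b' x' -> b = b' /\ x = x'.
Proof.
move=> /negbTE x_neq /negbTE x'_neq /ffunP eq_mon.
move: (eq_mon y) (eq_mon x); rewrite !ffunE !eqxx /= ![y == _]eq_sym x_neq x'_neq /=.
rewrite !mul1n !addn0 => ->.
by case: eqP => // _ /eqP; rewrite eqn_add2l.
Qed.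

Lemma ymul_cplx2_offdeg1 b x a a' : x != y -> a <> a' -> (x = a \/ x = a') ->
  (offdeg (ymul b (cplx2 a a')) <= 1)%N -> ymul b (cplx2 a a') = ymon b.+1 x.
Proof.
move=> x_neq a_neq x_in; rewrite offdeg_ymul offdeg_cplx2.
have [a_y|a_ny] := eqVneq a y; have [a'_y|a'_ny] := eqVneq a' y => //= _.
- by case: a_neq; rewrite a_y a'_y.
- by subst a; case: x_in => [x_y|->]; [rewrite x_y eqxx in x_neq|exact: ymul_cplx2l].
- by subst a'; case: x_in => [->|x_y]; [exact: ymul_cplx2r|rewrite x_y eqxx in x_neq].
Qed.

Lemma offdeg_replace (m : {ffun S -> nat}) i p : (1 <= offdeg p)%N -> (0 < m i)%N ->
  (offdeg m + nat_of_bool (i == y) <= offdeg (mon_replace m i p))%N.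
Proof.
move=> p_off mi_gt0; set rest := \sum_(z | z != y) (m z - nat_of_bool (z == i))%N.
have -> : offdeg (mon_replace m i p) = (rest + offdeg p)%N.
  by rewrite /offdeg -big_split; apply: eq_bigr => z _; rewrite ffunE.
have -> : offdeg m = (rest + nat_of_bool (i != y))%N.
  rewrite -offdeg_indicator /offdeg -big_split; apply: eq_bigr => z _ /=.
  by case: eqP => [->|]; rewrite ?subn0 ?addn0 // subnK.
by move: p_off; case: (i == y); case: (i != y) => /=; lia.
Qed.

End YMonomials.

Lemma lie_child_ymon (S C : finType) (y : S) b x (a : int) (ls : seq (label C))
    (r : reaction S C) :
  x != y -> r.2.2 x = 1%N -> r.2.1 x = 0%N ->
  lie_child (a, (ymon y b x, ls)) x r = (a, (ymul y b r.2.1, r.1 :: ls)).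
Proof.
move=> x_neq prod_x reac_x.
by rewrite /lie_child /= ymon_self // ymon_replace // prod_x reac_x !mulr1.
Qed.

(** * Consequences of (H1) *)

Section H1Facts.
Variables (S C : finType) (N : network S C).
Hypothesis hH1 : H1 N.

Lemma enz_neq_sub c j : (j <= len N c)%N -> enz N c <> sub N c j.
Proof. by case: hH1 => _ [H _] /H. Qed.

Lemma sub_inj c j j' : (j <= len N c)%N -> (j' <= len N c)%N ->
  sub N c j = sub N c j' -> j = j'.
Proof. by case: hH1 => _ [_ [H _]]; apply: H. Qed.

Lemma intm_inj c j c' j' : (1 <= j <= len N c)%N -> (1 <= j' <= len N c')%N ->
  intm N c j = intm N c' j' -> c = c' /\ j = j'.
Proof. by case: hH1 => _ [_ [_ [H _]]]; apply: H. Qed.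

Lemma intm_neq_enz c j c' : (1 <= j <= len N c)%N -> intm N c j <> enz N c'.
Proof. by case: hH1 => _ [_ [_ [_ [H _]]]]; apply: H. Qed.

Lemma intm_neq_sub c j c' j' : (1 <= j <= len N c)%N -> (j' <= len N c')%N ->
  intm N c j <> sub N c' j'.
Proof. by case: hH1 => _ [_ [_ [_ [_ [H _]]]]]; apply: H. Qed.

Lemma cplx2_enz_sub_neq c j c' j' : c <> c' -> (j <= len N c)%N -> (j' <= len N c')%N ->
  cplx2 (enz N c) (sub N c j) <> cplx2 (enz N c') (sub N c' j').
Proof. by case: hH1 => _ [_ [_ [_ [_ [_ H]]]]]; apply: H. Qed.

Lemma reac_a_in c j : (1 <= j <= len N c)%N -> reac_a N c j \in reactions N.
Proof. by move=> j_range; apply/reactionsP; exists c, j; split=> //; apply: Or31. Qed.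
Lemma reac_b_in c j : (1 <= j <= len N c)%N -> reac_b N c j \in reactions N.
Proof. by move=> j_range; apply/reactionsP; exists c, j; split=> //; apply: Or32. Qed.
Lemma reac_c_in c j : (1 <= j <= len N c)%N -> reac_c N c j \in reactions N.
Proof. by move=> j_range; apply/reactionsP; exists c, j; split=> //; apply: Or33. Qed.

Lemma cplx12_changed (a b w x : S) : cplx1 w x != cplx2 a b x -> [\/ x = a, x = b | x = w].
Proof.
rewrite !ffunE => changed.
have [->|xa] := eqVneq x a; first exact: Or31.
have [->|xb] := eqVneq x b; first exact: Or32.
by apply: Or33; apply/eqP; move: changed; rewrite (negbTE xa) (negbTE xb); case: (x == w).
Qed.

Lemma reactions_changing_intm c j r : (1 <= j <= len N c)%N -> r \in reactions N ->
  r.2.2 (intm N c j) != r.2.1 (intm N c j) ->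
  [\/ r = reac_a N c j, r = reac_b N c j | r = reac_c N c j].
Proof.
move=> j_range /reactionsP [c' [j' [j'_range r_kind]]] changed.
have not_enz := @intm_neq_enz _ _ c' j_range.
have not_sub j'' : (j'' <= len N c')%N -> intm N c j <> sub N c' j'' := intm_neq_sub j_range.
have same_intm : intm N c j = intm N c' j' -> c = c' /\ j = j' by apply: intm_inj.
have j'1 : (j'.-1 <= len N c')%N by move: j'_range; lia.
have j'0 : (j' <= len N c')%N by case/andP: j'_range.
case: r_kind changed => -> /= changed.
- case/cplx12_changed: changed => [/not_enz|/(not_sub _ j'1)|/same_intm [-> ->]] //.
  exact: Or31.
- rewrite eq_sym in changed.
  case/cplx12_changed: changed => [/not_enz|/(not_sub _ j'1)|/same_intm [-> ->]] //.
  exact: Or32.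
- rewrite eq_sym in changed.
  case/cplx12_changed: changed => [/not_enz|/(not_sub _ j'0)|/same_intm [-> ->]] //.
  exact: Or33.
Qed.

Section EnzymeDegree.
Variable c0 : C.
Local Notation y := (enz N c0).

Lemma offdeg_reactant r : r \in reactions N -> (1 <= offdeg y r.2.1)%N.
Proof.
case/reactionsP => c [j [j_range [] ->]] /=; last 2 first.
- by rewrite offdeg_cplx1; case: eqP => // /(intm_neq_enz j_range).
- by rewrite offdeg_cplx1; case: eqP => // /(intm_neq_enz j_range).
rewrite offdeg_cplx2; case: eqP => [enz_y|]; case: eqP => [sub_y|] //=.
by case: (@enz_neq_sub c j.-1); [move: j_range; lia|rewrite enz_y sub_y].
Qed.

Lemma offdeg_lie_path d m m' : lie_path N d m m' -> (offdeg y m <= offdeg y m')%N.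
Proof.
elim: d m => [m /= ->|d IH m [m1 [[i [r [r_in mi_gt0 _ m1_def]]] path]]] //.
apply: leq_trans (IH _ path); rewrite m1_def.
exact: leq_trans (leq_addr _ _) (offdeg_replace (offdeg_reactant r_in) mi_gt0).
Qed.

Lemma ymon_lie_path b x i r d r' v : x != y -> v != y -> r \in reactions N ->
  (0 < ymon y b x i)%N -> lie_path N d (mon_replace (ymon y b x) i r.2.1) (ymon y r' v) ->
  i = x /\ (offdeg y (ymul y b r.2.1) <= 1)%N.
Proof.
move=> x_neq v_neq r_in mi_gt0 path.
have := offdeg_lie_path path; rewrite offdeg_ymon // => off_le1.
have := leq_trans (offdeg_replace (offdeg_reactant r_in) mi_gt0) off_le1.
rewrite offdeg_ymon // => i_neq.
have i_x : i = x.
  by case: (ymon_gt0 mi_gt0) => // i_y; move: i_neq; rewrite i_y eqxx.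
by subst i; move: off_le1; rewrite ymon_replace.
Qed.

End EnzymeDegree.
End H1Facts.

(** * The two components *)

Section Theorem14.
Variables (S C : finType) (N : network S C).
Hypotheses (hH1 : H1 N) (hH2 : H2 N).
Variables (c1 c2 : C) (L n k : nat).
Hypotheses (c1_neq_c2 : c1 <> c2) (len_c1 : len N c1 = L) (len_c2 : len N c2 = L).
Hypothesis sub_c2 : forall j, (j <= L)%N -> sub N c2 j = sub N c1 (L - j).
Hypotheses (n_range : (1 <= n <= L)%N) (k_lt_n : (k < n)%N).

Local Notation Y := (enz N c1).
Local Notation Sub i := (sub N c1 i).
Local Notation U i := (intm N c1 i).
(* [V_{n-k}] is the intermediate number [J] of the second component. *)
Local Notation J := (L - (n - k) + 1)%N.
Local Notation V := (intm N c2 J).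

Lemma n_le_L : (n <= L)%N.
Proof. by case/andP: n_range. Qed.

Lemma J_range : (1 <= J <= len N c2)%N.
Proof. by rewrite len_c2; move: n_le_L; lia. Qed.

Lemma sub_c2_rev i : (i <= L)%N -> sub N c2 (L - i) = Sub i.
Proof. by move=> i_le; rewrite sub_c2 ?leq_subr // subKn. Qed.

Lemma sub_c2_Jpred : sub N c2 J.-1 = Sub (n - k).
Proof. by rewrite -sub_c2_rev; [congr (sub _ _ _)|]; move: n_le_L; lia. Qed.

Lemma sub_c2_J : sub N c2 J = Sub (n - k).-1.
Proof. by rewrite -sub_c2_rev; [congr (sub _ _ _)|]; move: n_le_L; lia. Qed.

Lemma Sub_neq_Y i : (i <= L)%N -> Sub i != Y.
Proof. by move=> i_le; apply/eqP/nesym/enz_neq_sub; rewrite ?len_c1. Qed.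

Lemma U_neq_Y i : (1 <= i <= L)%N -> U i != Y.
Proof. by move=> i_range; apply/eqP/intm_neq_enz; rewrite ?len_c1. Qed.

Lemma V_neq_Y : V != Y.
Proof. exact/eqP/(intm_neq_enz hH1 J_range). Qed.

Lemma Sub_neq_U i j : (i <= L)%N -> (1 <= j <= L)%N -> Sub i <> U j.
Proof. by move=> i_le j_range /esym; apply: intm_neq_sub; rewrite ?len_c1. Qed.

Lemma U_neq_V i : (1 <= i <= L)%N -> U i <> V.
Proof. by move=> i_range /intm_inj [] //; [rewrite len_c1|exact: J_range]. Qed.

Lemma Sub_neq_enz_c2 i : (i <= L)%N -> enz N c2 <> Sub i.
Proof.
by move=> i_le; rewrite -sub_c2_rev //; apply: enz_neq_sub; rewrite // len_c2 leq_subr.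
Qed.

Lemma enz_c2_neq_Y : enz N c2 <> Y.
Proof.
move=> enz_eq; have := @cplx2_enz_sub_neq _ _ _ hH1 c2 0 c1 L (nesym c1_neq_c2) (leq0n _).
by rewrite len_c1 enz_eq sub_c2 // subn0; apply.
Qed.

Lemma component_of_Y_Sub c j i : enz N c = Y -> (j <= len N c)%N -> (i <= L)%N ->
  sub N c j = Sub i -> c = c1.
Proof.
move=> enz_c j_le i_le sub_eq; have [//|/eqP c_neq] := eqVneq c c1.
have i_le' : (i <= len N c1)%N by rewrite len_c1.
by case: (cplx2_enz_sub_neq hH1 c_neq j_le i_le'); rewrite enz_c sub_eq.
Qed.

(* This is where (H2) enters: the substrates of [c] share the class of [S_i],
   which differs from the class of [Y]. *)
Lemma sub_neq_Y_of_shared c j j' i : (j <= len N c)%N -> (j' <= len N c)%N -> (i <= L)%N ->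
  sub N c j = Sub i -> sub N c j' <> Y.
Proof.
move=> j_le j'_le i_le sub_eq sub'_Y.
case: hH2 => M [cls [_ _ _ _ cls_comp]].
case: (cls_comp c) => a [_ [cls_c _]]; case: (cls_comp c1) => a1 [_ [cls_c1 cls_Y]].
have i_le' : (i <= len N c1)%N by rewrite len_c1.
by apply: cls_Y; rewrite -sub'_Y (cls_c j') // -(cls_c j j_le) sub_eq cls_c1.
Qed.

(* The potential of the lower bound: [milestone x h w] holds for the species
   [x] of a term [y^b x] that lies on a route to [V].  Each step along
   [S_n -> U_n -> S_{n-1} -> ... -> S_{n-k} -> V] raises [h] by exactly 2, any
   other step is "wasted" (counted by [s]), and at [V] the bounds of
   [on_budget] force [t >= 2k+1+s/2] and [b >= k].  [U_{n+1}], reached by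
   stepping back from [S_n], gets the trivial [h = w = 0]. *)
Inductive milestone (x : S) (h w : nat) : Prop :=
| MilestoneSub i of (i <= n)%N & x = Sub i & h = (4 * (n - i) + 2)%N & w = (n - i + 1)%N
| MilestoneU i of (1 <= i <= n)%N & x = U i & h = (4 * (n - i) + 4)%N & w = (n - i + 1)%N
| MilestoneUn of (n < L)%N & x = U n.+1 & h = 0%N & w = 0%N
| MilestoneEnz c j i of (1 <= j <= len N c)%N & sub N c j.-1 = Y & enz N c = Sub i &
    (i <= n)%N & x = intm N c j & h = (4 * (n - i) + 3)%N & w = (n - i + 1)%N
| MilestoneV of x = V & h = (4 * k + 4)%N & w = (k + 1)%N.

Definition on_budget (s t b h w : nat) : Prop :=
  [/\ (w <= b + 1)%N, (h + 2 * b <= 2 * t + 2 * w)%N & (h + s <= 2 * t + 2)%N].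

Definition feasible (s t b : nat) (x : S) : Prop :=
  exists h w, milestone x h w /\ on_budget s t b h w.

Definition stuck (x : S) : Prop := exists c j,
  [/\ (1 <= j <= len N c)%N, x = intm N c j, enz N c <> Y, sub N c j.-1 <> Y & x <> V].

Inductive tight_step (b : nat) (x : S) (r : reaction S C) (b' : nat) (x' : S) : Prop :=
| TightC i of (1 <= i <= L)%N & x = Sub i & r = reac_c N c1 i & x' = U i & b' = b
| TightA i of (1 <= i <= L)%N & x = U i & r = reac_a N c1 i & x' = Sub i.-1 & b' = b.+1
| TightB of x = Sub (n - k) & r = reac_b N c2 J & x' = V & b' = b.

Inductive step_outcome (s t b : nat) (x : S) (r : reaction S C) (m : {ffun S -> nat}) : Prop :=
| OutStuck x' of m = ymon Y b x' & stuck x'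
| OutWasted b' x' of m = ymon Y b' x' & feasible s.+1 t.+1 b' x'
| OutTight b' x' of m = ymon Y b' x' & feasible s t.+1 b' x' & tight_step b x r b' x'.

Lemma on_budget_waste s t b h w : on_budget s t b h w -> on_budget s.+1 t.+1 b h w.
Proof. by case; split; lia. Qed.

Lemma on_budget_bud s t b h w : on_budget s t b h w -> on_budget s.+1 t.+1 b.+1 h w.
Proof. by case; split; lia. Qed.

Lemma feasible_waste s t b x : feasible s t b x -> feasible s.+1 t.+1 b x.
Proof. by move=> [h [w [hw /on_budget_waste]]]; exists h, w. Qed.

Lemma feasible_weaken s t b x : feasible s.+1 t b x -> feasible s t b x.
Proof. by move=> [h [w [hw [? ? ?]]]]; exists h, w; split=> //; split; lia. Qed.

Lemma milestone_neq_Y x h w : milestone x h w -> x != Y.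
Proof.
case=> [i i_le -> _ _|i i_range -> _ _|n_lt -> _ _|c j i j_range _ _ _ -> _ _|-> _ _].
- by apply: Sub_neq_Y; move: n_le_L; lia.
- by apply: U_neq_Y; move: n_le_L; lia.
- by apply: U_neq_Y; lia.
- exact/eqP/(intm_neq_enz hH1 j_range).
- exact: V_neq_Y.
Qed.

Lemma feasible_neq_Y s t b x : feasible s t b x -> x != Y.
Proof. by move=> [h [w [/milestone_neq_Y]]]. Qed.

Lemma stuck_neq_Y x : stuck x -> x != Y.
Proof. by move=> [c [j [j_range -> _ _ _]]]; exact/eqP/(intm_neq_enz hH1 j_range). Qed.

Lemma ymul_reactant_bc b c j r : r = reac_b N c j \/ r = reac_c N c j ->
  ymul Y b r.2.1 = ymon Y b (intm N c j).
Proof. by case=> ->; rewrite ymul_cplx1. Qed.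

Lemma step_intm_waste s t b c j r : feasible s t b (intm N c j) ->
  r = reac_b N c j \/ r = reac_c N c j -> step_outcome s t b (intm N c j) r (ymul Y b r.2.1).
Proof.
by move=> feas /(ymul_reactant_bc b) ->; apply: OutWasted (feasible_waste feas).
Qed.

Lemma stuck_of_shared_Sub c j j' i : (1 <= j <= len N c)%N -> (j' <= len N c)%N ->
  (i <= L)%N -> c != c1 -> sub N c j' = Sub i -> intm N c j <> V -> stuck (intm N c j).
Proof.
move=> j_range j'_le i_le c_neq sub_eq intm_neq; exists c, j; split=> //.
  by move=> enz_c; move: c_neq; rewrite (component_of_Y_Sub enz_c j'_le i_le sub_eq) eqxx.
apply: (sub_neq_Y_of_shared j'_le _ i_le sub_eq).
by move: j_range; lia.
Qed.

Section StepFromSub.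
Variables (s t b i : nat).
Hypotheses (i_le_n : (i <= n)%N) (budget : on_budget s t b (4 * (n - i) + 2) (n - i + 1)).

Let i_le_L : (i <= L)%N. Proof. by move: n_le_L; lia. Qed.
Let i_le_len : (i <= len N c1)%N. Proof. by rewrite len_c1. Qed.

Lemma step_Sub_enzyme c j r : (1 <= j <= len N c)%N -> enz N c = Sub i ->
  step_outcome s t b (Sub i) r (ymon Y b (intm N c j)).
Proof.
move=> j_range enz_c; have [sub_Y|sub_nY] := eqVneq (sub N c j.-1) Y.
  apply: OutWasted (erefl _) _; exists (4 * (n - i) + 3)%N, (n - i + 1)%N.
  by split; [apply: (MilestoneEnz j_range sub_Y enz_c i_le_n)|case: budget; split; lia].
apply: OutStuck (erefl _) _; exists c, j; split=> //.
- by rewrite enz_c; exact/eqP/Sub_neq_Y.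
- exact/eqP.
move=> /(intm_inj hH1 j_range J_range) [c_c2 _].
by apply: (Sub_neq_enz_c2 i_le_L); rewrite -c_c2.
Qed.

Lemma step_Sub_a c j : (1 <= j <= len N c)%N ->
  (reac_a N c j).2.2 (Sub i) != (reac_a N c j).2.1 (Sub i) ->
  (offdeg Y (ymul Y b (reac_a N c j).2.1) <= 1)%N ->
  step_outcome s t b (Sub i) (reac_a N c j) (ymul Y b (reac_a N c j).2.1).
Proof.
move=> j_range changed off_le1.
have j1_le : (j.-1 <= len N c)%N by move: j_range; lia.
have Sub_in : Sub i = enz N c \/ Sub i = sub N c j.-1.
  case/cplx12_changed: changed; [by left|by right|].
  by move=> /esym /(intm_neq_sub hH1 j_range i_le_len).
have -> := ymul_cplx2_offdeg1 (Sub_neq_Y i_le_L) (enz_neq_sub hH1 j1_le) Sub_in off_le1.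
apply: OutWasted (erefl _) _; exists (4 * (n - i) + 2)%N, (n - i + 1)%N.
by split; [apply: (MilestoneSub i_le_n)|exact: on_budget_bud].
Qed.

Lemma step_Sub_b c j : (1 <= j <= len N c)%N ->
  (reac_b N c j).2.2 (Sub i) != (reac_b N c j).2.1 (Sub i) ->
  step_outcome s t b (Sub i) (reac_b N c j) (ymul Y b (reac_b N c j).2.1).
Proof.
move=> j_range; rewrite ymul_cplx1 /= eq_sym.
have j1_le : (j.-1 <= len N c)%N by move: j_range; lia.
case/cplx12_changed => [enz_c|sub_c|/esym /(intm_neq_sub hH1 j_range i_le_len) //].
  exact: step_Sub_enzyme.
have [c_c1|c_neq] := eqVneq c c1.
  subst c; have j_i : j.-1 = i := sub_inj hH1 j1_le i_le_len (esym sub_c).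
  apply: OutWasted (erefl _) _; case: budget => b1 b2 b3.
  have [i_lt|i_ge] := ltnP i n.
    exists (4 * (n - j) + 4)%N, (n - j + 1)%N.
    by split; [apply: (MilestoneU (i := j)) => //|split]; lia.
  have j_n : j = n.+1 by lia.
  exists 0%N, 0%N; split; last by split; lia.
  by apply: MilestoneUn; rewrite -?j_n //; move: j_range; rewrite len_c1 j_n.
have [intm_V|intm_nV] := eqVneq (intm N c j) V; last first.
  apply: OutStuck (erefl _) _.
  exact: stuck_of_shared_Sub j_range j1_le i_le_L c_neq (esym sub_c) (elimN eqP intm_nV).
have [c_c2 j_J] := intm_inj hH1 j_range J_range intm_V; subst c j.
have i_nk : i = (n - k)%N.
  by apply: (sub_inj hH1 i_le_len); rewrite ?len_c1 -?sub_c2_Jpred //; lia.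
apply: OutTight (erefl _) _ _; last by apply: TightB; rewrite ?i_nk.
by exists (4 * k + 4)%N, (k + 1)%N; split; [apply: MilestoneV|case: budget; split; lia].
Qed.

Lemma step_Sub_c c j : (1 <= j <= len N c)%N ->
  (reac_c N c j).2.2 (Sub i) != (reac_c N c j).2.1 (Sub i) ->
  step_outcome s t b (Sub i) (reac_c N c j) (ymul Y b (reac_c N c j).2.1).
Proof.
move=> j_range; rewrite ymul_cplx1 /= eq_sym.
have j_le : (j <= len N c)%N by case/andP: j_range.
case/cplx12_changed => [enz_c|sub_c|/esym /(intm_neq_sub hH1 j_range i_le_len) //].
  exact: step_Sub_enzyme.
have [c_c1|c_neq] := eqVneq c c1.
  subst c; have j_i : j = i := sub_inj hH1 j_le i_le_len (esym sub_c); subst j.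
  apply: OutTight (erefl _) _ _; last by apply: (TightC (i := i)) => //; rewrite -len_c1.
  exists (4 * (n - i) + 4)%N, (n - i + 1)%N.
  by split; [apply: (MilestoneU (i := i)) => //|case: budget; split]; lia.
have [intm_V|intm_nV] := eqVneq (intm N c j) V; last first.
  apply: OutStuck (erefl _) _.
  exact: stuck_of_shared_Sub j_range j_le i_le_L c_neq (esym sub_c) (elimN eqP intm_nV).
have [c_c2 j_J] := intm_inj hH1 j_range J_range intm_V; subst c j.
have i_nk : i = (n - k).-1.
  by apply: (sub_inj hH1 i_le_len); rewrite ?len_c1 -?sub_c2_J //; lia.
apply: OutWasted (erefl _) _.
by exists (4 * k + 4)%N, (k + 1)%N; split; [apply: MilestoneV|case: budget; split; lia].
Qed.

End StepFromSub.

Lemma step_U s t b i h w r : (1 <= i <= L)%N -> (i.-1 <= n)%N ->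
  h.+2 = (4 * (n - i.-1) + 2)%N -> w.+1 = (n - i.-1 + 1)%N ->
  milestone (U i) h w -> on_budget s t b h w ->
  r \in reactions N -> r.2.2 (U i) != r.2.1 (U i) ->
  step_outcome s t b (U i) r (ymul Y b r.2.1).
Proof.
move=> i_range i1_le h_eq w_eq ms budget r_in changed.
have feas : feasible s t b (U i) by exists h, w.
have i_range' : (1 <= i <= len N c1)%N by rewrite len_c1.
case: (reactions_changing_intm hH1 i_range' r_in changed) => [->|r_b|r_c]; last 2 first.
- by apply: step_intm_waste; [exact: feas|left].
- by apply: step_intm_waste; [exact: feas|right].
rewrite /= ymul_cplx2l; apply: OutTight (erefl _) _ _; last exact: (TightA (i := i)).
exists h.+2, w.+1; split; first by rewrite h_eq w_eq; apply: (MilestoneSub (i := i.-1)).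
by case: budget; split; lia.
Qed.

Lemma step_enzyme_intm s t b c j i r : (1 <= j <= len N c)%N -> sub N c j.-1 = Y ->
  enz N c = Sub i -> (i <= n)%N -> on_budget s t b (4 * (n - i) + 3) (n - i + 1) ->
  r \in reactions N -> r.2.2 (intm N c j) != r.2.1 (intm N c j) ->
  step_outcome s t b (intm N c j) r (ymul Y b r.2.1).
Proof.
move=> j_range sub_Y enz_c i_le budget r_in changed.
have feas : feasible s t b (intm N c j).
  exists (4 * (n - i) + 3)%N, (n - i + 1)%N.
  by split=> //; apply: (MilestoneEnz j_range sub_Y enz_c i_le).
case: (reactions_changing_intm hH1 j_range r_in changed) => [->|r_b|r_c]; last 2 first.
- by apply: step_intm_waste; [exact: feas|left].
- by apply: step_intm_waste; [exact: feas|right].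
rewrite /= sub_Y enz_c ymul_cplx2r; apply: OutWasted (erefl _) _.
exists (4 * (n - i) + 2)%N, (n - i + 1)%N; split; first exact: (MilestoneSub i_le).
by case: budget; split; lia.
Qed.

Lemma offdeg_reac_a_V : offdeg Y (reac_a N c2 J).2.1 = 2%N.
Proof.
rewrite /= offdeg_cplx2 sub_c2_Jpred Sub_neq_Y; last by move: n_le_L; lia.
by have /eqP -> := enz_c2_neq_Y.
Qed.

Lemma step_V s t b r : feasible s t b V -> r \in reactions N -> r.2.2 V != r.2.1 V ->
  (offdeg Y (ymul Y b r.2.1) <= 1)%N -> step_outcome s t b V r (ymul Y b r.2.1).
Proof.
move=> feas r_in changed; rewrite offdeg_ymul.
case: (reactions_changing_intm hH1 J_range r_in changed) => [->|r_b|r_c].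
- by rewrite offdeg_reac_a_V.
- by move=> _; apply: step_intm_waste; [exact: feas|left].
- by move=> _; apply: step_intm_waste; [exact: feas|right].
Qed.

Lemma step_stuck b x r : stuck x -> r \in reactions N -> r.2.2 x != r.2.1 x ->
  (offdeg Y (ymul Y b r.2.1) <= 1)%N -> ymul Y b r.2.1 = ymon Y b x.
Proof.
move=> [c [j [j_range -> enz_nY sub_nY _]]] r_in changed.
case: (reactions_changing_intm hH1 j_range r_in changed) => [->|r_b|r_c].
- rewrite offdeg_ymul /= offdeg_cplx2.
  by move/eqP: enz_nY => ->; move/eqP: sub_nY => ->.
- by move=> _; apply: ymul_reactant_bc; left.
- by move=> _; apply: ymul_reactant_bc; right.
Qed.

Lemma feasible_step s t b x r : feasible s t b x -> r \in reactions N -> r.2.2 x != r.2.1 x ->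
  (offdeg Y (ymul Y b r.2.1) <= 1)%N -> step_outcome s t b x r (ymul Y b r.2.1).
Proof.
move=> feas r_in changed off_le1; have [h [w [ms budget]]] := feas.
case: ms feas changed => [i i_le x_eq h_eq w_eq|i i_range x_eq h_eq w_eq|n_lt x_eq h_eq w_eq
  |c j i j_range sub_Y enz_c i_le x_eq h_eq w_eq|x_eq h_eq w_eq] feas changed;
  subst x h w.
- case/reactionsP: r_in changed off_le1 => c [j [j_range [] ->]] changed off_le1.
  + exact: step_Sub_a.
  + exact: step_Sub_b.
  + exact: step_Sub_c.
- apply: (step_U (h := (4 * (n - i) + 4)%N) (w := (n - i + 1)%N)) => //; try lia.
  by apply: (MilestoneU (i := i)).
- apply: (step_U (h := 0%N) (w := 0%N)) => //; try lia.
  exact: MilestoneUn.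
- exact: (step_enzyme_intm j_range sub_Y enz_c i_le budget r_in changed).
- exact: (step_V feas r_in changed off_le1).
Qed.

Lemma ymon_step_to_V b x m1 d r' : x != Y -> lie_step N (ymon Y b x) m1 ->
  lie_path N d m1 (ymon Y r' V) -> exists r, [/\ r \in reactions N, r.2.2 x != r.2.1 x,
    m1 = ymul Y b r.2.1 & (offdeg Y (ymul Y b r.2.1) <= 1)%N].
Proof.
move=> x_neq [i [r [r_in mi_gt0 changed ->]]] path.
have [i_x off_le1] := ymon_lie_path hH1 x_neq V_neq_Y r_in mi_gt0 path; subst i.
by exists r; rewrite ymon_replace.
Qed.

Lemma stuck_no_path d b x r' : stuck x -> ~ lie_path N d (ymon Y b x) (ymon Y r' V).
Proof.
move=> stuck_x; elim: d => [|d IH] /=.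
  move=> /(ymon_inj V_neq_Y (stuck_neq_Y stuck_x)) [_ V_x].
  by case: stuck_x => c [j [_ _ _ _]]; rewrite -V_x.
move=> [m1 [step path]].
have [r [r_in changed m1_eq off_le1]] := ymon_step_to_V (stuck_neq_Y stuck_x) step path.
by apply: IH; rewrite -(step_stuck stuck_x r_in changed off_le1) -m1_eq.
Qed.

Lemma milestone_V h w : milestone V h w -> h = (4 * k + 4)%N /\ w = (k + 1)%N.
Proof.
have n_le := n_le_L.
case=> [i i_le V_eq _ _|i i_range V_eq _ _|n_lt V_eq _ _|c j i j_range sub_Y _ _ V_eq _ _|//].
- have i_le' : (i <= len N c1)%N by rewrite len_c1; lia.
  by case: (intm_neq_sub hH1 J_range i_le' V_eq).
- have i_range' : (1 <= i <= len N c1)%N by rewrite len_c1; lia.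
  by case: (intm_inj hH1 J_range i_range' V_eq) => /esym/c1_neq_c2.
- have n1_range : (1 <= n.+1 <= len N c1)%N by rewrite len_c1.
  by case: (intm_inj hH1 J_range n1_range V_eq) => /esym/c1_neq_c2.
have [c_c2 j_J] := intm_inj hH1 J_range j_range V_eq; subst c j.
by move: sub_Y; rewrite sub_c2_Jpred => /eqP; rewrite (negbTE (Sub_neq_Y _)) //; lia.
Qed.

Lemma feasible_V_bounds s t b : feasible s t b V ->
  [/\ (k <= b)%N, (k + 1 + b <= t)%N & (4 * k + 4 + s <= 2 * t + 2)%N].
Proof. by move=> [h [w [/milestone_V [-> ->] [? ? ?]]]]; split; lia. Qed.

Lemma feasible_start : feasible 0 0 0 (Sub n).
Proof.
exists 2%N, 1%N; split; last by split; lia.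
by apply: (MilestoneSub (i := n)) => //; lia.
Qed.

Lemma feasible_path d s t b x r' : feasible s t b x ->
  lie_path N d (ymon Y b x) (ymon Y r' V) -> feasible s (t + d) r' V.
Proof.
elim: d s t b x => [|d IH] s t b x feas /=.
  by move=> /(ymon_inj V_neq_Y (feasible_neq_Y feas)) [-> ->]; rewrite addn0.
move=> [m1 [step path]]; rewrite -addSnnS.
have [r [r_in changed m1_eq off_le1]] := ymon_step_to_V (feasible_neq_Y feas) step path.
rewrite m1_eq in path.
case: (feasible_step feas r_in changed off_le1)
  => [x' m_eq stuck_x'|b' x' m_eq feas'|b' x' m_eq feas' _]; rewrite m_eq in path.
- by case: (stuck_no_path stuck_x' path).
- exact: feasible_weaken (IH _ _ _ _ feas' path).
- exact: IH feas' path.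
Qed.

Lemma lie_path_Sub_V_bounds d r : lie_path N d (cplx1 (Sub n)) (ymon Y r V) ->
  (k <= r)%N /\ (k + 1 + r <= d)%N.
Proof.
rewrite -(ymon0 Y) => /(feasible_path feasible_start).
by rewrite add0n => /feasible_V_bounds [].
Qed.

Lemma tight_child t d b x (a : int) ls i r : feasible 0 t b x -> (t + d.+1 = 2 * k + 1)%N ->
  r \in reactions N -> (lie_child (a, (ymon Y b x, ls)) i r).1 != 0%R ->
  lie_path N d (lie_child (a, (ymon Y b x, ls)) i r).2.1 (ymon Y k V) ->
  i = x /\ exists b' x', tight_step b x r b' x' /\ lie_path N d (ymon Y b' x') (ymon Y k V).
Proof.
move=> feas t_eq r_in child_neq0 path.
have [_ mi_gt0 changed] := lie_child_neq0 child_neq0.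
have x_neq := feasible_neq_Y feas.
have [i_x off_le1] := ymon_lie_path hH1 x_neq V_neq_Y r_in mi_gt0 path; subst i.
split=> //; move: path; rewrite /= ymon_replace //.
case: (feasible_step feas r_in changed off_le1)
  => [x' -> stuck_x'|b' x' -> feas'|b' x' -> _ tight] path.
- by case: (stuck_no_path stuck_x' path).
- (* a wasted step leaves no slack: [4k + 5 <= 2 (2k + 1) + 2] fails *)
  by have [_ _] := feasible_V_bounds (feasible_path feas' path); lia.
- by exists b', x'.
Qed.

Lemma coef_iter_lieS_tight d t b x (a : int) ls e r0 : feasible 0 t b x ->
  (t + d.+1 = 2 * k + 1)%N -> r0 \in reactions N ->
  (forall r b' x', tight_step b x r b' x' ->
     lie_path N d (ymon Y b' x') (ymon Y k V) -> r = r0) ->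
  coef (iter d.+1 (lie N) [:: (a, (ymon Y b x, ls))]) (ymon Y k V) e =
  coef (iter d (lie N) [:: lie_child (a, (ymon Y b x, ls)) x r0]) (ymon Y k V) e.
Proof.
move=> feas t_eq r0_in tight_r0; apply: coef_iter_lieS_single => // i r r_in ir_neq.
apply: coef_iter_lie_eq0 => child_neq0 path.
have [i_x [b' [x' [tight path']]]] := tight_child feas t_eq r_in child_neq0 path.
by move: ir_neq; rewrite i_x (tight_r0 _ _ _ tight path') eqxx.
Qed.

Lemma feasible_chain_Sub p : (p <= k)%N -> feasible 0 (2 * p) p (Sub (n - p)).
Proof.
move=> p_le; exists (4 * p + 2)%N, (p + 1)%N; split; last by split; lia.
by apply: (MilestoneSub (i := (n - p)%N)) => //; lia.
Qed.

Lemma feasible_chain_U p : (p < k)%N -> feasible 0 (2 * p + 1) p (U (n - p)).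
Proof.
move=> p_lt; exists (4 * p + 4)%N, (p + 1)%N; split; last by split; lia.
by apply: (MilestoneU (i := (n - p)%N)) => //; lia.
Qed.

Lemma lie_child_Sub_c b i (a : int) ls : (1 <= i <= L)%N ->
  lie_child (a, (ymon Y b (Sub i), ls)) (Sub i) (reac_c N c1 i) =
  (a, (ymon Y b (U i), (c1, i, 2%N) :: ls)).
Proof.
move=> i_range; have i_le : (i <= L)%N by case/andP: i_range.
have prod_Sub : (reac_c N c1 i).2.2 (Sub i) = 1%N.
  by rewrite /= ffunE eqxx (negbTE (Sub_neq_Y i_le)).
have reac_Sub : (reac_c N c1 i).2.1 (Sub i) = 0%N.
  by rewrite /= ffunE; case: eqP => // /(Sub_neq_U i_le i_range).
by rewrite lie_child_ymon ?Sub_neq_Y // ymul_cplx1.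
Qed.

Lemma lie_child_U_a b i (a : int) ls : (1 <= i <= L)%N ->
  lie_child (a, (ymon Y b (U i), ls)) (U i) (reac_a N c1 i) =
  (a, (ymon Y b.+1 (Sub i.-1), (c1, i, 0%N) :: ls)).
Proof.
move=> i_range; have i1_le : (i.-1 <= L)%N by move: i_range; lia.
have prod_U : (reac_a N c1 i).2.2 (U i) = 1%N by rewrite /= ffunE eqxx.
have reac_U : (reac_a N c1 i).2.1 (U i) = 0%N.
  rewrite /= ffunE (negbTE (U_neq_Y i_range)).
  by case: eqP => // /esym /(Sub_neq_U i1_le i_range).
by rewrite lie_child_ymon ?U_neq_Y // ymul_cplx2l.
Qed.

Lemma lie_child_Sub_b b (a : int) ls :
  lie_child (a, (ymon Y b (Sub (n - k)), ls)) (Sub (n - k)) (reac_b N c2 J) =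
  (a, (ymon Y b V, (c2, J, 1%N) :: ls)).
Proof.
have nk_le : (n - k <= L)%N by move: n_le_L; lia.
have prod_Sub : (reac_b N c2 J).2.2 (Sub (n - k)) = 1%N.
  rewrite /= ffunE sub_c2_Jpred eqxx.
  by case: eqP => // /esym /(Sub_neq_enz_c2 nk_le).
have reac_Sub : (reac_b N c2 J).2.1 (Sub (n - k)) = 0%N.
  rewrite /= ffunE; case: eqP => // /esym /(intm_neq_sub hH1 J_range).
  by rewrite len_c1 => /(_ nk_le).
by rewrite lie_child_ymon ?Sub_neq_Y // ymul_cplx1.
Qed.

Definition chain_labels (p : nat) : seq (label C) := (c2, J, 1%N) ::
  flatten [seq [:: (c1, (n - j)%N, 0%N); (c1, (n - j)%N, 2%N)] | j <- rev (iota p (k - p))].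

Lemma chain_labelsS p : (p < k)%N ->
  chain_labels p = chain_labels p.+1 ++ [:: (c1, (n - p)%N, 0%N); (c1, (n - p)%N, 2%N)].
Proof.
move=> p_lt; rewrite /chain_labels (_ : (k - p = (k - p.+1).+1)%N); last by lia.
by rewrite /= rev_cons map_rcons flatten_rcons.
Qed.

Lemma coef_last_step (a : int) ls e :
  coef (iter 1 (lie N) [:: (a, (ymon Y k (Sub (n - k)), ls))]) (ymon Y k V) e =
  if perm_eq e ((c2, J, 1%N) :: ls) then a else 0%R.
Proof.
have nk_le : (n - k <= L)%N by move: n_le_L; lia.
rewrite (@coef_iter_lieS_tight 0 (2 * k) _ _ _ _ _ (reac_b N c2 J)).
- by rewrite lie_child_Sub_b /= coef_seq1 eqxx perm_sym.
- exact: feasible_chain_Sub.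
- by rewrite addn1.
- exact: reac_b_in J_range.
move=> r b' x'; case=> [i i_range _ _ -> _|i i_range Sub_U _ _ _|_ -> //] /= path.
- by case: (ymon_inj V_neq_Y (U_neq_Y i_range) path) => _ /esym /(U_neq_V i_range).
- by case: (Sub_neq_U nk_le i_range Sub_U).
Qed.

Lemma tight_from_Sub p b r b' x' : (p < k)%N ->
  tight_step b (Sub (n - p)) r b' x' -> r = reac_c N c1 (n - p).
Proof.
have n_le := n_le_L; move=> p_lt.
have np_le : (n - p <= len N c1)%N by rewrite len_c1; lia.
case=> [i i_range Sub_eq -> _ _|i i_range Sub_U _ _ _|Sub_eq _ _ _].
- by rewrite (sub_inj hH1 np_le _ Sub_eq) // len_c1; case/andP: i_range.
- by case: (Sub_neq_U (_ : (n - p <= L)%N) i_range Sub_U); lia.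
- by have := sub_inj hH1 np_le _ Sub_eq; rewrite len_c1; lia.
Qed.

Lemma tight_from_U p b r b' x' : (p < k)%N ->
  tight_step b (U (n - p)) r b' x' -> r = reac_a N c1 (n - p).
Proof.
have n_le := n_le_L; move=> p_lt.
have np_range : (1 <= n - p <= len N c1)%N by rewrite len_c1; lia.
case=> [i i_range U_Sub _ _ _|i i_range U_eq -> _ _|U_Sub _ _ _].
- have i_le : (i <= len N c1)%N by rewrite len_c1; move: i_range; lia.
  by case: (intm_neq_sub hH1 np_range i_le U_Sub).
- have i_range' : (1 <= i <= len N c1)%N by rewrite len_c1.
  by case: (intm_inj hH1 np_range i_range' U_eq) => _ <-.
- by case: (intm_neq_sub hH1 np_range (_ : (n - k <= len N c1)%N) U_Sub); rewrite len_c1; lia.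
Qed.

Lemma coef_iter_lie_chain q p (a : int) ls e : (p + q = k)%N ->
  coef (iter (2 * q).+1 (lie N) [:: (a, (ymon Y p (Sub (n - p)), ls))]) (ymon Y k V) e =
  if perm_eq e (chain_labels p ++ ls) then a else 0%R.
Proof.
elim: q p a ls => [|q IH] p a ls pq_k.
  by rewrite addn0 in pq_k; subst p; rewrite coef_last_step /chain_labels subnn.
have p_lt : (p < k)%N by lia.
have np_range_L : (1 <= n - p <= L)%N by move: n_le_L; lia.
have np_range : (1 <= n - p <= len N c1)%N by rewrite len_c1.
have t_Sub : (2 * p + (2 * q).+2.+1 = 2 * k + 1)%N by lia.
have t_U : (2 * p + 1 + (2 * q).+1.+1 = 2 * k + 1)%N by lia.
rewrite (_ : (2 * q.+1).+1 = (2 * q).+2.+1)%N; last by lia.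
rewrite (coef_iter_lieS_tight _ _ _ (feasible_chain_Sub (ltnW p_lt)) t_Sub (reac_c_in np_range)
  (fun r b' x' tight _ => tight_from_Sub p_lt tight)).
rewrite lie_child_Sub_c //.
rewrite (coef_iter_lieS_tight _ _ _ (feasible_chain_U p_lt) t_U (reac_a_in np_range)
  (fun r b' x' tight _ => tight_from_U p_lt tight)).
rewrite lie_child_U_a // (_ : (n - p).-1 = n - p.+1)%N; last by lia.
by rewrite IH ?(chain_labelsS p_lt) -?catA //; lia.
Qed.

Lemma coef_iter_lie_V e :
  coef (iter (2 * k + 1) (lie N) (var C (Sub n))) (ymon Y k V) e =
  if perm_eq e ((c2, J, 1%N) ::
    flatten [seq [:: (c1, (n - j)%N, 0%N); (c1, (n - j)%N, 2%N)] | j <- iota 0 k])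
  then 1%R else 0%R.
Proof.
have := @coef_iter_lie_chain k 0 1 [::] e (add0n k).
rewrite subn0 cats0 -addn1 /var ymon0 => ->.
suff chain_perm : perm_eq (chain_labels 0) ((c2, J, 1%N) ::
    flatten [seq [:: (c1, (n - j)%N, 0%N); (c1, (n - j)%N, 2%N)] | j <- iota 0 k]).
  by rewrite (permPr chain_perm).
by rewrite /chain_labels perm_cons subn0 map_rev; apply: perm_flatten; rewrite perm_rev.
Qed.

End Theorem14.

Local Open Scope ring_scope.

Theorem mainTheorem14 (S C : finType) (N : network S C)
  (hH1 : H1 N) (hH2 : H2 N) (c1 c2 : C) (hc : c1 <> c2) (L : nat)
  (hL : (1 <= L)%N) (hlen1 : len N c1 = L) (hlen2 : len N c2 = L)
  (hsub : forall j, (j <= L)%N -> sub N c2 j = sub N c1 (L - j))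
  (n k : nat) (hn : (1 <= n <= L)%N) (hk : (k < n)%N) :
  let Y := enz N c1 in
  let V := intm N c2 (L - (n - k) + 1)%N in
  let mon := fun r : nat =>
    [ffun x => (nat_of_bool (x == Y) * r + nat_of_bool (x == V))%N] in
  let s := var C (sub N c1 n) in
  let target : seq (label C) :=
    (c2, (L - (n - k) + 1)%N, 1%N) ::
      flatten [seq [:: (c1, (n - j)%N, 0%N); (c1, (n - j)%N, 2%N)]
              | j <- iota 0 k] in
  [/\ (forall l r, (0 < l < 2 * k + 1)%N -> ~ appears (iter l (lie N) s) (mon r)),
      (forall r, appears (iter (2 * k + 1) (lie N) s) (mon r) <-> r = k) &
      (forall e, coef (iter (2 * k + 1) (lie N) s) (mon k) e =
                 (if perm_eq e target then 1 else 0))].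
Proof.
move=> Y V mon s target.
have bounds l r : appears (iter l (lie N) s) (mon r) -> (k <= r)%N /\ (k + 1 + r <= l)%N.
  by move/appears_iter_lie_path/(lie_path_Sub_V_bounds hH1 hH2 hc hlen1 hlen2 hsub hn hk).
have coefE := coef_iter_lie_V hH1 hH2 hc hlen1 hlen2 hsub hn hk.
split=> [l r l_range /bounds|r|//]; first lia.
split=> [/bounds|->]; first lia.
by exists target; rewrite coefE perm_refl.

Qed.
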